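(* Let $(\Omega,\mathcal A)$ be a measurable space and let $K:\Omega\to\mathcal K'(\mathbb C^n)$ be a random compact set. Then its polynomially convex hull $\widehat K$, defined by $\widehat K(\omega)=\widehat{K(\omega)}$, is a random compact set.
   Context: $\mathcal K'(\mathbb C^n)$ is the space of non-empty compact subsets of $\mathbb C^n$ with the Hausdorff distance and its Borel $\sigma$-algebra; a random compact set is a measurable map $\Omega\to\mathcal K'(\mathbb C^n)$. For a compact $L$, $\widehat L=\{z\in\mathbb C^n:|p(z)|\le\max_{x\in L}|p(x)| \text{ for all polynomials } p \text{ on } \mathbb C^n\}$. *)

From HB Require Import structures.
From mathcomp Require Import all_boot all_order all_algebra.
From mathcomp Require Import all_classical all_reals all_analysis.
From mathcomp Require Import complex.
Import numFieldTopology.Exports numFieldNormedType.Exports.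
Import Order.TTheory GRing.Theory Num.Theory.

Set Implicit Arguments.
Unset Strict Implicit.
Unset Printing Implicit Defensive.

Local Open Scope classical_set_scope.
Local Open Scope ring_scope.

(* The complex numbers R[i] (R a real closed field, e.g. a realType) get the
   topology/uniform structure of their numClosedField norm (the usual one).
   C^n is represented as row vectors 'rV[R[i]]_n with the (product)
   matrix topology, i.e. the standard topology of C^n. *)
HB.instance Definition _ (R : rcfType) :=
  PseudoPointedMetric.copy R[i] (R[i] : numClosedFieldType)^o.

Definition edist (R : realType) (n : nat) (z w : 'rV[R[i]]_n) : R :=
  Num.sqrt (\sum_(j < n) (Normc.normc (z 0 j - w 0 j)) ^+ 2).

Definition pt_set_dist (R : realType) (n : nat) (x : 'rV[R[i]]_n)
    (B : set 'rV[R[i]]_n) : \bar R :=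
  ereal_inf [set (edist x b)%:E | b in B].

Definition hausdorff_dist (R : realType) (n : nat) (A B : set 'rV[R[i]]_n)
    : \bar R :=
  maxe (ereal_sup [set pt_set_dist a B | a in A])
       (ereal_sup [set pt_set_dist b A | b in B]).

Definition Kprime (R : realType) (n : nat) : set (set 'rV[R[i]]_n) :=
  [set L | compact L /\ L !=set0].

Arguments Kprime : clear implicits.

Definition hausdorff_open (R : realType) (n : nat)
    : set (set (set 'rV[R[i]]_n)) :=
  [set U | U `<=` Kprime R n /\
     forall L, U L -> exists2 e : R, 0 < e &
       forall L', Kprime R n L' -> (hausdorff_dist L L' < e%:E)%E -> U L'].

Arguments hausdorff_open : clear implicits.

Definition hausdorff_borel (R : realType) (n : nat)
    : set (set (set 'rV[R[i]]_n)) :=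
  <<s Kprime R n, hausdorff_open R n >>.

Arguments hausdorff_borel : clear implicits.

Definition random_compact_set (d : measure_display) (T : measurableType d)
    (R : realType) (n : nat) (K : T -> set 'rV[R[i]]_n) : Prop :=
  (forall w, Kprime R n (K w)) /\
  (forall B, hausdorff_borel R n B -> measurable (K @^-1` B)).

Definition is_polynomial (R : realType) (n : nat) (p : 'rV[R[i]]_n -> R[i])
    : Prop :=
  exists s : seq (R[i] * ('I_n -> nat)),
    forall z, p z = \sum_(m <- s) m.1 * \prod_(j < n) (z 0 j) ^+ (m.2 j).

(* polynomially convex hull; the max over the compact L is written as sup *)
Definition poly_hull (R : realType) (n : nat) (L : set 'rV[R[i]]_n)
    : set 'rV[R[i]]_n :=
  [set z | forall p, is_polynomial p ->
           Normc.normc (p z) <= sup [set Normc.normc (p x) | x in L]].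

(* The hull of a compact set L is closed and lies in the polydisc bounded by the sup
   norms of the coordinates on L, hence it is compact.  The map L |-> hull L is upper
   semicontinuous for the Hausdorff metric: if hull L is inside an open V, compactness
   of (polydisc minus V) gives finitely many polynomials p_i and constants
   c_i > sup_L |p_i| whose sets {|p_i| > c_i} cover it, and by uniform continuity the
   bounds sup |p_i| <= c_i survive on every L' close enough to L, forcing hull L'
   inside V.  So {L | hull L is inside V} is Hausdorff-open.  Closed Hausdorff balls
   around finite sets are countable Boolean combinations of such sets, and finite sets
   of Gaussian-rational points are dense in K'(C^n), so every Hausdorff-open set, hence
   every Borel set, has a Borel preimage under the hull; composing with K concludes. *)

From Pilot Require Import Defs.
From HB Require Import structures.
From mathcomp Require Import all_boot all_order all_algebra.
From mathcomp Require Import all_classical all_reals all_analysis.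
From mathcomp Require Import complex.
From mathcomp Require Import finmap lra.
Import numFieldTopology.Exports numFieldNormedType.Exports.
Import Order.TTheory GRing.Theory Num.Theory.

Local Open Scope classical_set_scope.
Local Open Scope complex_scope.
Local Open Scope ring_scope.

Lemma sqrtr_le {R : rcfType} (a b : R) : 0 <= b -> a <= b ^+ 2 -> Num.sqrt a <= b.
Proof. by move=> b0 ab; rewrite -(ger0_norm b0) -sqrtr_sqr; exact: ler_wsqrtr. Qed.

Lemma sum_sqr_le_sqr_sum {R : numDomainType} {I : Type} (r : seq I) (P : pred I)
    (a : I -> R) : (forall i, P i -> 0 <= a i) ->
  \sum_(i <- r | P i) a i ^+ 2 <= (\sum_(i <- r | P i) a i) ^+ 2.
Proof.
move=> a0; suff [] : 0 <= \sum_(i <- r | P i) a i /\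
  \sum_(i <- r | P i) a i ^+ 2 <= (\sum_(i <- r | P i) a i) ^+ 2 by [].
apply: (big_rec2 (fun u v => 0 <= v /\ u <= v ^+ 2)) => [|i u v Pi [v0 uv]].
  by rewrite expr0n.
split; first by rewrite addr_ge0 ?a0.
by rewrite sqrrD -addrA lerD2l (le_trans uv) // lerDr mulrn_wge0 ?mulr_ge0 ?a0.
Qed.

Lemma exists_natSinv_lt {R : archiRealFieldType} {e : R} : 0 < e ->
  exists k : nat, k.+1%:R^-1 < e.
Proof.
move=> e0; have [k _ ke] := near_infty_natSinv_lt (PosNum e0).
by exists k; apply: ke => /=.
Qed.

Lemma lee_EFin_natSinv {R : realType} (x : \bar R) (r : R) :
  (x <= r%:E)%E <-> forall k : nat, (x <= (r + k.+1%:R^-1)%:E)%E.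
Proof.
split=> [xr k|xr]; first by apply: le_trans xr _; rewrite lee_fin lerDl.
apply/lee_addgt0Pr => e /exists_natSinv_lt [k ke].
by apply: le_trans (xr k) _; rewrite lee_fin lerD2l ltW.
Qed.

Lemma compact_finite_subcover {T : ptopologicalType} {A : set T} (O : T -> set T) :
  compact A -> (forall a, A a -> open (O a)) -> (forall a, A a -> O a a) ->
  exists (I : finType) (c : I -> T), (forall i, A (c i)) /\ A `<=` \bigcup_i O (c i).
Proof.
rewrite compact_cover => Acover Oopen Oa.
have [|D DA AD] := Acover T A O Oopen; first by move=> a Aa; exists a => //; exact: Oa.
exists (fset_sub_type D), val; split=> [i|a /AD [b /= bD Oba]].
  exact: set_mem (DA _ (valP i)).
by exists [` bD]%fset.
Qed.

Section GeneratedSigmaAlgebra.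
Context {T : Type} {D : set T} {G : set (set T)}.
Local Notation S := <<s D, G >>.

Lemma sigma_algebra_bigcapD (F : (set T)^nat) : (forall k, S (F k)) ->
  S (D `&` \bigcap_k F k).
Proof.
move=> SF; have -> : D `&` \bigcap_k F k = D `\` \bigcup_k (D `\` F k).
  apply/seteqP; split=> [x [Dx Fx]|x [Dx DFx]].
    by split=> // -[k _ [_]]; apply; exact: Fx.
  by split=> // k _; apply: contrapT => nFkx; apply: DFx; exists k.
by apply: sigma_algebraCD; apply: sigma_algebra_bigcup => k; exact: sigma_algebraCD.
Qed.

Lemma sigma_algebra_setI (A B : set T) : A `<=` D -> S A -> S B -> S (A `&` B).
Proof.
move=> AD SA SB; have := @sigma_algebra_bigcapD (fun k => if k is 0 then A else B).
have -> : D `&` \bigcap_k (if k is 0 then A else B) = A `&` B.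
  apply/seteqP; split=> [x [_ AB]|x [Ax Bx]].
    by split; [exact: (AB 0%N) | exact: (AB 1%N)].
  by split=> [|[|k] _]; [exact: AD | |].
by apply; case.
Qed.

Lemma sigma_algebra_setI_bigcap_seq {I : eqType} (s : seq I) {A : set T} {F : I -> set T} :
  A `<=` D -> S A -> (forall i, S (F i)) -> S (A `&` \bigcap_(i in [set` s]) F i).
Proof.
move=> AD SA SF; elim: s => [|i s IHs].
  by rewrite (_ : \bigcap_(i in _) _ = setT) ?setIT //; apply/seteqP; split.
have -> : A `&` \bigcap_(j in [set` i :: s]) F j =
    (A `&` F i) `&` (A `&` \bigcap_(j in [set` s]) F j).
  apply/seteqP; split=> [x [Ax Fx] | x [[Ax Fix] [_ Fx]]].
    split; first by split=> //; apply: Fx; rewrite /= inE eqxx.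
    by split=> // j js; apply: Fx; rewrite /= inE js orbT.
  by split=> // j; rewrite /= inE => /predU1P [-> | /Fx].
apply: sigma_algebra_setI IHs; first by move=> x [/AD].
exact: sigma_algebra_setI.
Qed.

End GeneratedSigmaAlgebra.

Section ComplexModulus.
Context {R : rcfType}.
Local Notation normc := (@Normc.normc R).

Lemma normc_ge0 (x : R[i]) : 0 <= normc x.
Proof. exact: (@normr_ge0 _ (Rcomplex R)). Qed.

Lemma normc_distC (x y : R[i]) : normc (x - y) = normc (y - x).
Proof. exact: (@distrC _ (Rcomplex R)). Qed.

Lemma ler_normc_distD (x y z : R[i]) :
  normc (x - z) <= normc (x - y) + normc (y - z).
Proof. by rewrite -(subrKA y); exact: le_normcD. Qed.

Lemma normc_Lipschitz (x y : R[i]) : `|normc x - normc y| <= normc (x - y).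
Proof. exact: (@ler_dist_dist _ (Rcomplex R)). Qed.

Lemma normc_le_ReIm (a b : R) : normc (a +i* b) <= `|a| + `|b|.
Proof.
apply: sqrtr_le; first by rewrite addr_ge0.
rewrite -(real_normK (num_real a)) -(real_normK (num_real b)) sqrrD.
have : 0 <= `|a| * `|b| *+ 2 by rewrite mulrn_wge0 ?mulr_ge0.
lra.
Qed.

Lemma Re_le_normc (x : R[i]) : `|complex.Re x| <= normc x.
Proof.
by case: x => a b; rewrite /= -sqrtr_sqr; apply: ler_wsqrtr; rewrite lerDl sqr_ge0.
Qed.

Lemma Im_le_normc (x : R[i]) : `|complex.Im x| <= normc x.
Proof.
by case: x => a b; rewrite /= -sqrtr_sqr; apply: ler_wsqrtr; rewrite lerDr sqr_ge0.
Qed.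

Lemma minkowski_sqrt_sum {I : Type} (r : seq I) (P : pred I) (a b : I -> R) :
  Num.sqrt (\sum_(i <- r | P i) (a i + b i) ^+ 2)
    <= Num.sqrt (\sum_(i <- r | P i) a i ^+ 2)
       + Num.sqrt (\sum_(i <- r | P i) b i ^+ 2).
Proof.
pose K (u v w : R) := [/\ 0 <= v, 0 <= w & u <= (Num.sqrt v + Num.sqrt w) ^+ 2].
suff [_ _] : K (\sum_(i <- r | P i) (a i + b i) ^+ 2)
    (\sum_(i <- r | P i) a i ^+ 2) (\sum_(i <- r | P i) b i ^+ 2).
  by apply: sqrtr_le; rewrite addr_ge0 ?sqrtr_ge0.
apply: big_rec3 => [|i u v w _ [v0 w0 le_uvw]].
  by rewrite /K sqrtr0 addr0 expr0n.
split; [exact: addr_ge0 (sqr_ge0 _) v0 | exact: addr_ge0 (sqr_ge0 _) w0 |].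
(* the triangle inequality in C for (sqrt v +i* a i) + (sqrt w +i* b i) *)
have := le_normcD (Num.sqrt v +i* a i) (Num.sqrt w +i* b i).
rewrite /= !sqr_sqrtr // -(ler_sqr (sqrtr_ge0 _)) ?nnegrE ?addr_ge0 ?sqrtr_ge0 //.
rewrite sqr_sqrtr ?addr_ge0 ?sqr_ge0 // => le_sum.
rewrite [a i ^+ 2 + v]addrC [b i ^+ 2 + w]addrC; apply: le_trans le_sum.
by rewrite addrC lerD2r.
Qed.

End ComplexModulus.

Lemma ltc_normc {R : rcfType} (x : R[i]) (r : R) :
  (`|x| < r%:C) = (Normc.normc x < r).
Proof. by rewrite ltcE /= eqxx. Qed.

Lemma normc_continuous {R : realType} : continuous (@Normc.normc R : R[i] -> R).
Proof.
move=> x A /nbhs_ballP [e e0 eA]; apply/nbhs_ballP.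
exists e%:C; first by rewrite /= ltcR.
move=> y; rewrite /ball /= ltc_normc => xy; apply: eA.
by rewrite /ball /=; exact/le_lt_trans/xy/normc_Lipschitz.
Qed.

Lemma continuous_Complex {R : realType} :
  continuous (fun ab : R * R => (ab.1 +i* ab.2) : R[i]).
Proof.
move=> [a b] A /nbhs_ballP [[e e']] /=; rewrite ltcE /= => /andP [/eqP -> e0] eA.
apply/nbhs_ballP; exists (e / 2); first by rewrite /= divr_gt0.
move=> [a' b'] [/= aa' bb']; apply: eA; rewrite /ball /= ltc_normc.
apply: le_lt_trans (normc_le_ReIm _ _) _.
by move: aa' bb'; rewrite /ball /=; lra.
Qed.

Lemma compact_disc {R : realType} (rho : R) :
  compact [set x : R[i] | Normc.normc x <= rho].
Proof.
have square_compact : compact ((fun ab : R * R => (ab.1 +i* ab.2) : R[i]) @`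
    (`[- rho, rho] `*` `[- rho, rho])).
  apply: continuous_compact; first exact/continuous_subspaceT/continuous_Complex.
  by apply: compact_setX; exact: segment_compact.
apply: (subclosed_compact _ square_compact).
  by apply: preimage_closed (@closed_le _ _); move=> x _; exact: normc_continuous.
move=> x /= x_rho; exists (complex.Re x, complex.Im x); last by case: x {x_rho}.
have := Re_le_normc x; have := Im_le_normc x.
by split; rewrite /= in_itv /= -ler_norml; lra.
Qed.

Section EuclideanDistance.
Context {R : realType} {n : nat}.
Local Notation X := 'rV[R[i]]_n.
Local Notation normc := (@Normc.normc R).
Local Notation edist := (@Defs.edist R n).
Implicit Types z w : X.

Lemma edistC z w : edist z w = edist w z.
Proof. by congr Num.sqrt; apply: eq_bigr => j _; rewrite normc_distC. Qed.

Lemma edistxx z : edist z z = 0.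
Proof.
by rewrite /Defs.edist big1 ?sqrtr0 // => j _; rewrite subrr Normc.normc0 expr0n.
Qed.

Lemma ler_edistD z y w : edist z w <= edist z y + edist y w.
Proof.
apply: le_trans (minkowski_sqrt_sum _ _ _ _); apply: ler_wsqrtr.
apply: ler_sum => j _.
by rewrite ler_sqr ?nnegrE ?addr_ge0 ?normc_ge0 ?ler_normc_distD.
Qed.

Lemma normc_coord_le_edist z w j : normc (z 0 j - w 0 j) <= edist z w.
Proof.
rewrite -[leLHS]ger0_norm ?normc_ge0 // -sqrtr_sqr; apply: ler_wsqrtr.
by rewrite (bigD1 j) //= lerDl sumr_ge0 // => k _; rewrite sqr_ge0.
Qed.

Lemma edist_lt_coord z w (e : R) : 0 < e ->
  (forall j, normc (z 0 j - w 0 j) < e / n.+1%:R) -> edist z w < e.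
Proof.
move=> e0 near_zw; apply: (@le_lt_trans _ _ (\sum_j normc (z 0 j - w 0 j))).
  apply: sqrtr_le; first by rewrite sumr_ge0 // => j _; rewrite normc_ge0.
  by rewrite sum_sqr_le_sqr_sum // => j _; rewrite normc_ge0.
apply: (@le_lt_trans _ _ (\sum_(j < n) e / n.+1%:R)).
  by apply: ler_sum => j _; rewrite ltW.
rewrite sumr_const card_ord -mulrnAr gtr_pMr // -mulr_natr.
rewrite -[ltRHS](@divff _ n.+1%:R) // mulrC ltr_pM2r ?invr_gt0 ?ltr0n //.
by rewrite ltr_nat.
Qed.

End EuclideanDistance.

Section EuclideanTopology.
Context {R : realType} {n : nat}.
Local Notation X := 'rV[R[i]]_n.
Local Notation normc := (@Normc.normc R).
Local Notation edist := (@Defs.edist R n).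
Implicit Types (z w : X) (A : set X).

Lemma nbhs_edistP z A :
  nbhs z A <-> exists2 r : R, 0 < r & forall w, edist z w < r -> A w.
Proof.
split.
  move=> /nbhs_ballP [[a b]] /=; rewrite ltcE /= => /andP [/eqP -> a0] zaA.
  exists a => // w zw; apply: zaA; split => [|i j]; first by rewrite ltcE /= eqxx.
  rewrite (ord1 i) /ball /= ltc_normc.
  exact: le_lt_trans (normc_coord_le_edist _ _ _) zw.
move=> [r r0 zrA]; apply/nbhs_ballP; exists (r / n.+1%:R)%:C.
  by rewrite /= ltcR divr_gt0.
move=> w [_ zw]; apply: zrA; apply: edist_lt_coord => // j.
by have := zw 0 j; rewrite /ball /= ltc_normc.
Qed.

Lemma open_edistP A :
  open A <-> forall z, A z -> exists2 r : R, 0 < r & forall w, edist z w < r -> A w.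
Proof.
rewrite openE; split=> [Aopen z /Aopen /nbhs_edistP // | Aballs z /Aballs].
by move/nbhs_edistP.
Qed.

Lemma open_edist_ball z (r : R) : open [set w | edist z w < r].
Proof.
apply/open_edistP => y zy; exists (r - edist z y) => [|w yw].
  by rewrite subr_gt0.
by have := ler_edistD z y w; rewrite /=; lra.
Qed.

Lemma polynomial_continuous {p : X -> R[i]} : is_polynomial p ->
  continuous (p : X -> R[i]^o).
Proof.
move=> [s ps]; rewrite (funext ps).
apply: (@continuous_big R[i]^o _ +%R 0 xpredT add_continuous) => m _ z.
apply: continuousM; [exact: cst_continuous | move: z].
apply: (@continuous_big R[i]^o _ *%R 1 xpredT mul_continuous) => j _.
rewrite (_ : (fun z : X => _) = fun z => \prod_(k < m.2 j) z 0 j).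
  apply: (@continuous_big R[i]^o _ *%R 1 xpredT mul_continuous) => k _.
  exact: coord_continuous.
by apply: funext => z; rewrite prodr_const card_ord.
Qed.

Lemma normc_polynomial_continuous {p : X -> R[i]} : is_polynomial p ->
  continuous (fun z => normc (p z)).
Proof.
move=> /polynomial_continuous p_cont z.
exact: continuous_comp (p_cont z) (@normc_continuous R (p z)).
Qed.

Lemma open_edist_gt (x : X) (c : R) : open [set a | c < edist x a].
Proof.
apply/open_edistP => a xa; exists (edist x a - c); first by rewrite subr_gt0.
by move=> w aw; have := ler_edistD x w a; rewrite (edistC w a) /=; lra.
Qed.

End EuclideanTopology.

Section Enlargement.
Context {R : realType} {n : nat}.
Local Notation X := 'rV[R[i]]_n.
Local Notation edist := (@Defs.edist R n).

Definition enlargement (L : set X) (d : R) : set X :=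
  [set z | exists2 a, L a & edist a z < d].

Lemma enlargement_le (L : set X) {d d' : R} : d <= d' ->
  enlargement L d `<=` enlargement L d'.
Proof. by move=> dd' z [a La az]; exists a => //; exact: lt_le_trans dd'. Qed.

Lemma compact_enlargement_sub {L W : set X} : compact L -> open W -> L `<=` W ->
  exists2 d : R, 0 < d & enlargement L d `<=` W.
Proof.
move=> Lcompact /open_edistP Wopen LW.
have /choice [r r_spec] : forall a, exists r : R,
    L a -> 0 < r /\ forall w, edist a w < r *+ 2 -> W w.
  move=> a; have [La|nLa] := pselect (L a); last by exists 1 => /nLa [].
  have [r r0 aW] := Wopen a (LW a La); exists (r / 2) => _.
  split=> [|w aw]; first exact: divr_gt0.
  by apply: aW; move: aw; rewrite mulr2n; lra.
have ball_center a : L a -> edist a a < r a by rewrite edistxx => /r_spec [].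
have [I [c [Lc Lcover]]] := compact_finite_subcover (fun a => [set w | edist a w < r a])
  Lcompact (fun a _ => open_edist_ball a (r a)) ball_center.
exists (\big[Num.min/1]_i r (c i)).
  by apply: lt_bigmin => // i _; exact: (r_spec _ (Lc i)).1.
move=> z [a /Lcover [i _ /= cia] az]; apply: (r_spec _ (Lc i)).2.
have : \big[Num.min/1]_j r (c j) <= r (c i) by exact: bigmin_le.
have := ler_edistD (c i) a z.
rewrite mulr2n; lra.
Qed.

End Enlargement.

Section PolynomialHull.
Context {R : realType} {n : nat}.
Local Notation X := 'rV[R[i]]_n.
Local Notation normc := (@Normc.normc R).
Local Notation edist := (@Defs.edist R n).
Local Notation hull := (@poly_hull R n).
Local Notation supnorm p L := (sup [set Normc.normc (p x) | x in L]).
Local Notation coordinate j := (fun z : X => z 0 j).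
Implicit Types (L : set X) (p : X -> R[i]).

Lemma polynomial_has_ubound {L p} : compact L -> is_polynomial p ->
  has_ubound [set normc (p x) | x in L].
Proof.
move=> Lcompact /normc_polynomial_continuous p_cont.
have /compact_bounded [M [_ LM]] : compact [set normc (p x) | x in L].
  by apply: continuous_compact Lcompact; exact: continuous_subspaceT.
by exists (M + 1) => y /LM My; rewrite (le_trans _ (My _ _)) ?ler_norm ?ltrDl.
Qed.

Lemma supnorm_ge {L p x} : compact L -> is_polynomial p -> L x ->
  normc (p x) <= supnorm p L.
Proof. by move=> Lc pp Lx; apply: ub_le_sup; [exact: polynomial_has_ubound | exists x]. Qed.

Lemma supnorm_le {L p} {M : R} : L !=set0 ->
  (forall x, L x -> normc (p x) <= M) -> supnorm p L <= M.
Proof.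
move=> [x Lx] pM; apply: ge_sup; first by exists (normc (p x)), x.
by move=> _ [y Ly <-]; exact: pM.
Qed.

Lemma sub_poly_hull {L} : compact L -> L `<=` hull L.
Proof. by move=> Lc x Lx p pp; exact: supnorm_ge. Qed.

Lemma closed_poly_hull L : closed (hull L).
Proof.
have -> : hull L = \bigcap_(p in @is_polynomial R n)
    ((fun z => normc (p z)) @^-1` [set r | r <= supnorm p L]) by [].
apply: closed_bigI => p pp; apply: preimage_closed (@closed_le _ _) => z _.
exact: normc_polynomial_continuous.
Qed.

Lemma coordinate_polynomial j : is_polynomial (coordinate j).
Proof.
exists [:: (1, fun k : 'I_n => nat_of_bool (k == j))] => z.
rewrite big_seq1 mul1r (bigD1 j) //= eqxx expr1 big1 ?mulr1 // => k /negbTE ->.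
by rewrite expr0.
Qed.

Definition polydisc (rho : 'I_n -> R) : set X :=
  [set z | forall j, normc (z 0 j) <= rho j].

Lemma compact_polydisc rho : compact (polydisc rho).
Proof. by have := rV_compact (fun j => compact_disc (rho j)). Qed.

Lemma poly_hull_sub_polydisc L :
  hull L `<=` polydisc (fun j => supnorm (coordinate j) L).
Proof. by move=> z hz j; exact: hz _ (coordinate_polynomial j). Qed.

Lemma compact_poly_hull L : compact (hull L).
Proof.
exact: subclosed_compact (closed_poly_hull L) (compact_polydisc _)
  (poly_hull_sub_polydisc L).
Qed.

Lemma Kprime_poly_hull {L} : Kprime R n L -> Kprime R n (hull L).
Proof.
move=> [Lc [x Lx]]; split; first exact: compact_poly_hull.
by exists x; exact: sub_poly_hull.
Qed.

Lemma open_normc_polynomial_lt {p} (c : R) : is_polynomial p ->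
  open [set z | normc (p z) < c].
Proof.
move=> /normc_polynomial_continuous/continuousP/(_ [set r | r < c]).
by apply; exact: open_lt.
Qed.

Lemma open_normc_polynomial_gt {p} (c : R) : is_polynomial p ->
  open [set z | c < normc (p z)].
Proof.
move=> /normc_polynomial_continuous/continuousP/(_ [set r | c < r]).
by apply; exact: open_gt.
Qed.

Lemma supnorm_le_enlargement {L p} {c : R} : compact L -> is_polynomial p ->
  supnorm p L < c -> exists2 d : R, 0 < d &
    forall L', L' !=set0 -> L' `<=` enlargement L d -> supnorm p L' <= c.
Proof.
move=> Lc pp Lp_lt.
have [|d d0 LdW] := compact_enlargement_sub Lc (open_normc_polynomial_lt c pp).
  by move=> z Lz; exact: le_lt_trans (supnorm_ge Lc pp Lz) Lp_lt.
exists d => // L' L'0 L'sub; apply: supnorm_le => // z /L'sub /LdW; exact: ltW.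
Qed.

Lemma poly_hull_enlargement_sub_polydisc {L L'} {d : R} : compact L -> d <= 1 ->
  L' !=set0 -> L' `<=` enlargement L d ->
  hull L' `<=` polydisc (fun j => supnorm (coordinate j) L + 1).
Proof.
move=> Lc d1 L'0 L'sub z /poly_hull_sub_polydisc hz j; apply: le_trans (hz j) _.
apply: supnorm_le => // z' /L'sub [a La az'].
have := le_normcD (z' 0 j - a 0 j) (a 0 j); rewrite subrK.
have := supnorm_ge Lc (coordinate_polynomial j) La.
have := normc_coord_le_edist z' a j; rewrite edistC /=; lra.
Qed.

Lemma poly_hull_complement_cover {L S} :
  compact S -> (forall z, S z -> ~ hull L z) ->
  exists (I : finType) (p : I -> X -> R[i]) (c : I -> R),
    (forall i, is_polynomial (p i) /\ supnorm (p i) L < c i) /\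
    (forall z, S z -> exists i, c i < normc (p i z)).
Proof.
move=> Sc S_hull.
have /choice [pc pc_spec] : forall z, exists pc : (X -> R[i]) * R, S z ->
    [/\ is_polynomial pc.1, supnorm pc.1 L < pc.2 & pc.2 < normc (pc.1 z)].
  move=> z; have [Sz|nSz] := pselect (S z); last by exists (fun=> 0, 0) => /nSz.
  have /existsNP [p /not_implyP [pp /negP]] := S_hull z Sz; rewrite -ltNge => Lp_lt.
  by exists (p, (supnorm p L + normc (p z)) / 2) => _; split => //=; lra.
have [||I [a [Sa Scover]]] := compact_finite_subcover
    (fun z => [set w | (pc z).2 < normc ((pc z).1 w)]) Sc _ _.
- by move=> z /pc_spec [pp _ _]; exact: open_normc_polynomial_gt.
- by move=> z /pc_spec [].
exists I, (fun i => (pc (a i)).1), (fun i => (pc (a i)).2); split.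
  by move=> i; have [] := pc_spec _ (Sa i).
by move=> z /Scover [i _ ?]; exists i.
Qed.

Lemma poly_hull_upper_semicontinuous {L V} :
  Kprime R n L -> open V -> hull L `<=` V ->
  exists2 d : R, 0 < d &
    forall L', L' !=set0 -> L' `<=` enlargement L d -> hull L' `<=` V.
Proof.
move=> [Lc _] Vopen LV.
pose P := polydisc (fun j => supnorm (coordinate j) L + 1).
have Sc : compact (P `&` ~` V).
  exact: compact_closedI (compact_polydisc _) (open_closedC Vopen).
have S_hull z : (P `&` ~` V) z -> ~ hull L z by move=> [_ nVz] /LV.
have [I [p [c [pc Scover]]]] := poly_hull_complement_cover Sc S_hull.
have /choice [d d_spec] : forall i, exists d : R, 0 < d /\
    forall L', L' !=set0 -> L' `<=` enlargement L d -> supnorm (p i) L' <= c i.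
  move=> i; have [pp Lp_lt] := pc i.
  by have [d] := supnorm_le_enlargement Lc pp Lp_lt; exists d.
exists (\big[Num.min/1]_i d i); first by apply: lt_bigmin => // i _; exact: (d_spec i).1.
move=> L' L'0 L'sub z hz; apply: contrapT => nVz.
have Pz : P z.
  by apply: (poly_hull_enlargement_sub_polydisc Lc _ L'0 L'sub _ hz); exact: bigmin_le_id.
have [i lt_c] := Scover z (conj Pz nVz).
have L'sub_i : L' `<=` enlargement L (d i).
  by apply: subset_trans L'sub (enlargement_le L _); exact: bigmin_le.
have := (d_spec i).2 L' L'0 L'sub_i; have := hz _ (pc i).1; lra.
Qed.

End PolynomialHull.

Section HausdorffDistance.
Context {R : realType} {n : nat}.
Local Notation X := 'rV[R[i]]_n.
Local Notation edist := (@Defs.edist R n).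
Local Open Scope ereal_scope.
Implicit Types (a b : X) (A B C : set X).

Lemma pt_set_dist_le {a B b} : B b -> pt_set_dist a B <= (edist a b)%:E.
Proof. by move=> Bb; apply: ereal_inf_lbound; exists b. Qed.

Lemma pt_set_dist_lt {a B} {t : R} :
  pt_set_dist a B < t%:E -> exists2 b, B b & (edist a b < t)%R.
Proof. by move=> /ereal_inf_lt [_ [b Bb <-]]; rewrite lte_fin; exists b. Qed.

Lemma pt_set_dist_ge {a B} {t : R} : (forall b, B b -> t <= edist a b)%R ->
  t%:E <= pt_set_dist a B.
Proof. by move=> tB; apply: le_ereal_inf_tmp => _ [b Bb <-]; rewrite lee_fin tB. Qed.

Lemma pt_set_dist_trans {a B C} {x y : R} : pt_set_dist a B <= x%:E ->
  (forall b, B b -> pt_set_dist b C <= y%:E) -> pt_set_dist a C <= (x + y)%:E.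
Proof.
move=> aB BC; apply/lee_addgt0Pr => e e0.
have e20 : (0 < e / 2)%R by rewrite divr_gt0.
have [b Bb ab] : exists2 b, B b & (edist a b < x + e / 2)%R.
  by apply: pt_set_dist_lt; apply: le_lt_trans aB _; rewrite lte_fin ltrDl.
have [c Cc bc] : exists2 c, C c & (edist b c < y + e / 2)%R.
  by apply: pt_set_dist_lt; apply: le_lt_trans (BC b Bb) _; rewrite lte_fin ltrDl.
apply: le_trans (pt_set_dist_le Cc) _; rewrite -EFinD lee_fin.
by have := ler_edistD a b c; lra.
Qed.

Lemma hausdorff_dist_ge_l {A B a} : A a -> pt_set_dist a B <= hausdorff_dist A B.
Proof. by move=> Aa; rewrite le_max ereal_sup_ubound //; exists a. Qed.

Lemma hausdorff_dist_ge_r {A B b} : B b -> pt_set_dist b A <= hausdorff_dist A B.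
Proof.
by move=> Bb; rewrite le_max [X in _ || X]ereal_sup_ubound ?orbT //; exists b.
Qed.

Lemma hausdorff_dist_le {A B} {t : \bar R} :
  (forall a, A a -> pt_set_dist a B <= t) -> (forall b, B b -> pt_set_dist b A <= t) ->
  hausdorff_dist A B <= t.
Proof.
move=> AB BA; rewrite ge_max; apply/andP.
by split; apply: ge_ereal_sup => _ [x Ax <-]; [exact: AB | exact: BA].
Qed.

Lemma hausdorff_distC A B : hausdorff_dist A B = hausdorff_dist B A.
Proof. exact: maxC. Qed.

Lemma hausdorff_dist_triangle {A B C} {x y : R} :
  hausdorff_dist A B <= x%:E -> hausdorff_dist B C <= y%:E ->
  hausdorff_dist A C <= (x + y)%:E.
Proof.
move=> AB BC; apply: hausdorff_dist_le => [a Aa | c Cc].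
  apply: pt_set_dist_trans (le_trans (hausdorff_dist_ge_l Aa) AB) _ => b Bb.
  exact: le_trans (hausdorff_dist_ge_l Bb) BC.
rewrite addrC.
apply: pt_set_dist_trans (le_trans (hausdorff_dist_ge_r Cc) BC) _ => b Bb.
exact: le_trans (hausdorff_dist_ge_r Bb) AB.
Qed.

Lemma hausdorff_dist_lt_enlargement {A B} {t : R} : hausdorff_dist A B < t%:E ->
  B `<=` enlargement A t.
Proof.
move=> ABt b Bb.
have /pt_set_dist_lt [a Aa ba] := le_lt_trans (hausdorff_dist_ge_r Bb) ABt.
by exists a; rewrite // edistC.
Qed.

Lemma open_pt_set_dist_lt (F : set X) (c : R) : open [set a | pt_set_dist a F < c%:E].
Proof.
apply/open_edistP => a /pt_set_dist_lt [b Fb ab]; exists (c - edist a b)%R.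
  by rewrite subr_gt0.
move=> w aw; apply: le_lt_trans (pt_set_dist_le Fb) _; rewrite lte_fin.
by have := ler_edistD w a b; rewrite edistC in aw; lra.
Qed.

End HausdorffDistance.

Section RationalPoints.
Context {R : realType} {n : nat}.
Local Notation X := 'rV[R[i]]_n.
Local Notation edist := (@Defs.edist R n).

Definition rational_point (v : 'rV[rat * rat]_n) : X :=
  \row_j (ratr (v 0 j).1 +i* ratr (v 0 j).2).

Definition rational_finset (k : nat) : seq X :=
  map rational_point (odflt [::] (choice.unpickle k)).

Lemma rational_complex_dense (c : R[i]) {e : R} : 0 < e ->
  exists q : rat * rat, Normc.normc ((ratr q.1 +i* ratr q.2) - c) < e.
Proof.
case: c => a b e0; have e2 : 0 < e / 2 by rewrite divr_gt0.
have /rat_in_itvoo [q1] : a - e / 2 < a + e / 2 by lra.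
have /rat_in_itvoo [q2] : b - e / 2 < b + e / 2 by lra.
rewrite !in_itv /= => /andP [q2l q2r] /andP [q1l q1r].
exists (q1, q2); apply: le_lt_trans (normc_le_ReIm _ _) _.
have : `|ratr q1 - a| < e / 2 by rewrite ltr_norml; apply/andP; split; lra.
have : `|ratr q2 - b| < e / 2 by rewrite ltr_norml; apply/andP; split; lra.
rewrite /=; lra.
Qed.

Lemma rational_point_dense (a : X) {e : R} : 0 < e ->
  exists v, edist a (rational_point v) < e.
Proof.
move=> e0; have e1 : 0 < e / n.+1%:R by rewrite divr_gt0.
have /choice [q q_spec] := fun j : 'I_n => rational_complex_dense (a 0 j) e1.
exists (\row_j q j); apply: edist_lt_coord => // j.
by rewrite normc_distC /rational_point !mxE.
Qed.

Lemma compact_rational_finset_approx {M : set X} {e : R} : compact M -> 0 < e ->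
  exists k, (hausdorff_dist M [set` rational_finset k] <= e%:E)%E.
Proof.
move=> Mc e0; have e2 : 0 < e / 2 by rewrite divr_gt0.
have ball_center a : M a -> edist a a < e / 2 by rewrite edistxx.
have [I [c [Mc_ Mcover]]] := compact_finite_subcover
  (fun a => [set w | edist a w < e / 2]) Mc (fun a _ => open_edist_ball a _) ball_center.
have /choice [v v_spec] := fun i : I => rational_point_dense (c i) e2.
exists (choice.pickle [seq v i | i <- enum I]).
rewrite /rational_finset choice.pickleK /= -map_comp.
apply: hausdorff_dist_le => [a /Mcover [i _ /= cia] | _ /mapP [i _ ->]].
  apply: le_trans (pt_set_dist_le (map_f _ (mem_enum I i))) _; rewrite lee_fin /=.
  have := ler_edistD a (c i) (rational_point (v i)); rewrite edistC in cia.
  by have := v_spec i; lra.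
apply: le_trans (pt_set_dist_le (Mc_ i)) _; rewrite lee_fin /= edistC.
by have := v_spec i; lra.
Qed.

End RationalPoints.

Section PolyHullMeasurable.
Context {R : realType} {n : nat}.
Local Notation X := 'rV[R[i]]_n.
Local Notation edist := (@Defs.edist R n).
Local Notation hull := (@poly_hull R n).
Local Notation KP := (Kprime R n).
Local Notation SB := (hausdorff_borel R n).
Local Open Scope ereal_scope.

Lemma hausdorff_borel_poly_hull_sub {V : set X} : open V ->
  SB [set L | KP L /\ hull L `<=` V].
Proof.
move=> Vopen; apply: sub_sigma_algebra; split=> [L [] //|L [KL LV]].
have [d d0 Ld] := poly_hull_upper_semicontinuous KL Vopen LV.
exists d => // L' KL' LL'; split=> //; apply: Ld; first by case: KL'.
exact: hausdorff_dist_lt_enlargement.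
Qed.

Lemma hausdorff_borel_poly_hull_near (F : set X) (r : R) :
  SB [set L | KP L /\ forall a, hull L a -> pt_set_dist a F <= r%:E].
Proof.
pose V k := [set a | pt_set_dist a F < (r + k.+1%:R^-1)%:E].
have -> : [set L | KP L /\ forall a, hull L a -> pt_set_dist a F <= r%:E] =
    KP `&` \bigcap_k [set L | KP L /\ hull L `<=` V k].
  apply/seteqP; split=> [L [KL LF] | L [KL LF]]; split=> //.
    by move=> k _; split=> // a /LF /le_lt_trans; apply; rewrite lte_fin ltrDl.
  by move=> a La; apply/lee_EFin_natSinv => k; have [_ /(_ a La) /ltW] := LF k I.
apply: sigma_algebra_bigcapD => k; apply: hausdorff_borel_poly_hull_sub.
exact: open_pt_set_dist_lt.
Qed.

Lemma hausdorff_borel_pt_poly_hull (x : X) (r : R) :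
  SB [set L | KP L /\ pt_set_dist x (hull L) <= r%:E].
Proof.
pose W k := [set a | (r + k.+1%:R^-1 < edist x a)%R].
have -> : [set L | KP L /\ pt_set_dist x (hull L) <= r%:E] =
    KP `\` \bigcup_k [set L | KP L /\ hull L `<=` W k].
  apply/seteqP; split=> [L [KL xL] | L [KL xL]]; split=> //.
    move=> [k _ [_ LW]]; have := le_trans (pt_set_dist_ge (fun a La => ltW (LW a La))) xL.
    by rewrite lee_fin gerDl leNgt invr_gt0 ltr0n.
  apply/lee_EFin_natSinv => k.
  have /existsNP [a /not_implyP [La /negP]] : ~ hull L `<=` W k.
    by move=> LW; apply: xL; exists k.
  by rewrite -leNgt => xa; apply: le_trans (pt_set_dist_le La) _; rewrite lee_fin.
apply: sigma_algebraCD; apply: sigma_algebra_bigcup => k.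
apply: hausdorff_borel_poly_hull_sub; exact: open_edist_gt.
Qed.

Lemma hausdorff_borel_poly_hull_ball (t : seq X) (r : R) :
  SB [set L | KP L /\ hausdorff_dist [set` t] (hull L) <= r%:E].
Proof.
have -> : [set L | KP L /\ hausdorff_dist [set` t] (hull L) <= r%:E] =
    [set L | KP L /\ forall a, hull L a -> pt_set_dist a [set` t] <= r%:E] `&`
    \bigcap_(b in [set` t]) [set L | KP L /\ pt_set_dist b (hull L) <= r%:E].
  apply/seteqP; split=> [L [KL tL] | L [[KL tL] Lt]].
    split; first by split=> // a La; exact: le_trans (hausdorff_dist_ge_r La) tL.
    by move=> b bt; split=> //; exact: le_trans (hausdorff_dist_ge_l bt) tL.
  by split=> //; apply: hausdorff_dist_le => // b /Lt [].
apply: (sigma_algebra_setI_bigcap_seq t) => [L [] // | | b].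
  exact: hausdorff_borel_poly_hull_near.
exact: hausdorff_borel_pt_poly_hull.
Qed.

Lemma hausdorff_borel_poly_hull_preimage (U : set (set X)) : hausdorff_open R n U ->
  SB [set L | KP L /\ U (hull L)].
Proof.
move=> [_ Uopen].
pose rad j : R := (j.+1%:R^-1)%R.
pose close k j (M : set X) := hausdorff_dist [set` rational_finset k] M <= (rad j)%:E.
(* [T k j] is empty unless the closed ball of radius [rad j] about [rational_finset k]
   lies in [U], in which case it is the preimage of that ball. *)
pose T k j := [set L | (forall M, KP M -> close k j M -> U M) /\ KP L /\ close k j (hull L)].
have -> : [set L | KP L /\ U (hull L)] = \bigcup_k \bigcup_j T k j.
  apply/seteqP; split=> [L [KL UL] | L [k _ [j _ [kjU [KL kjL]]]]]; last first.
    by split=> //; apply: kjU => //; exact: Kprime_poly_hull.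
  have KhL := Kprime_poly_hull KL; have [e e0 eU] := Uopen _ UL.
  have [j je] := exists_natSinv_lt (divr_gt0 e0 (ltr0n R 2)).
  have rad0 : (0 < rad j)%R by rewrite invr_gt0.
  have [k kL] := compact_rational_finset_approx KhL.1 rad0.
  exists k => //; exists j => //; split; last by split=> //; rewrite /close hausdorff_distC.
  move=> M KM kM; apply: eU KM _; apply: le_lt_trans (hausdorff_dist_triangle kL kM) _.
  by rewrite lte_fin; move: je; rewrite /rad; set x := (j.+1%:R^-1)%R; lra.
apply: sigma_algebra_bigcup => k; apply: sigma_algebra_bigcup => j.
have [kjU | nkjU] := pselect (forall M, KP M -> close k j M -> U M); last first.
  rewrite (_ : T k j = set0); first exact: sigma_algebra0.
  by apply/seteqP; split=> // L [/nkjU].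
rewrite (_ : T k j = [set L | KP L /\ close k j (hull L)]).
  exact: hausdorff_borel_poly_hull_ball.
by apply/seteqP; split=> [L [_ //] | L ?]; split.
Qed.

Lemma sigma_algebra_poly_hull_image : sigma_algebra KP (image_set_system KP hull SB).
Proof.
rewrite /image_set_system; split=> [|B SB_B|F SB_F] /=.
- by rewrite preimage_set0 setI0; exact: sigma_algebra0.
- have -> : KP `&` hull @^-1` (KP `\` B) = KP `\` (KP `&` hull @^-1` B).
    apply/seteqP; split=> [L [KL [_ nBL]] | L [KL nBL]]; first by split=> // -[].
    by split=> //; split=> [|BL]; [exact: Kprime_poly_hull | exact: nBL].
  exact: sigma_algebraCD.
- by rewrite preimage_bigcup setI_bigcupr; exact: sigma_algebra_bigcup.
Qed.

End PolyHullMeasurable.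

Theorem theorem6p13 (d : measure_display) (T : measurableType d)
    (R : realType) (n : nat) (K : T -> set 'rV[R[i]]_n) :
  random_compact_set K ->
  random_compact_set (fun w => poly_hull (K w)).
Proof.
move=> [K_KP K_meas]; split=> [w | B SB_B]; first exact: Kprime_poly_hull.
have : image_set_system (Kprime R n) (@poly_hull R n) (hausdorff_borel R n) B.
  apply: smallest_sub sigma_algebra_poly_hull_image _ _ SB_B => U U_open.
  exact: hausdorff_borel_poly_hull_preimage.
move=> /K_meas; congr measurable; apply/seteqP; split=> w //=.
by move=> [].
Qed.
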